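(* Let $p\ge 5$ be a prime with $p\equiv 1\pmod 6$, and regard $r$ as an indeterminate. Let $\tilde c_1(r),\tilde c_2(r),\tilde c_3(r)\in\mathbb F_p[r]$ be the coefficients of $x^{2p-2}y^{p-1}z^{p-1}$, $x^{p-1}y^{2p-2}z^{p-1}$ and $x^{p-1}y^{p-1}z^{2p-2}$ in $(x^3z+y^4+ry^2z^2+z^4)^{p-1}$. Then: \begin{enumerate} \item Modulo $p$, $\tilde c_3(r)$ is divisible by $\tilde c_1(r)$. \item The only roots of $\tilde c_2(r)$ (in an algebraic closure of $\mathbb F_p$) are $r=\pm 2$; hence $\tilde c_2(r)\neq 0$ for every other $r$ in an algebraic closure of $\mathbb F_p$. \end{enumerate} *)

From HB Require Import structures.
From mathcomp Require Import all_boot all_algebra all_field.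
From mathcomp Require Import mpoly.
Set Implicit Arguments. Unset Strict Implicit. Unset Printing Implicit Defensive.
Import GRing.Theory.
Local Open Scope ring_scope.

(* The polynomial  x^3 z + y^4 + r y^2 z^2 + z^4  in three variables x = 'X_0,
   y = 'X_1, z = 'X_2, with coefficients in F_p[r] = {poly 'F_p}
   (r is the indeterminate 'X of {poly 'F_p}). *)
Definition quarticF (p : nat) : {mpoly {poly 'F_p}[3]} :=
  'X_(0 : 'I_3) ^+ 3 * 'X_(2 : 'I_3)
  + 'X_(1 : 'I_3) ^+ 4
  + ('X : {poly 'F_p}) *: ('X_(1 : 'I_3) ^+ 2 * 'X_(2 : 'I_3) ^+ 2)
  + 'X_(2 : 'I_3) ^+ 4.

Definition ctilde (p a b c : nat) : {poly 'F_p} :=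
  (quarticF p ^+ (p - 1)) @_ [multinom [tuple a; b; c]].

Definition ctilde1 (p : nat) := ctilde p (2 * p - 2) (p - 1) (p - 1).
Definition ctilde2 (p : nat) := ctilde p (p - 1) (2 * p - 2) (p - 1).
Definition ctilde3 (p : nat) := ctilde p (p - 1) (p - 1) (2 * p - 2).

From HB Require Import structures.
From mathcomp Require Import all_boot all_algebra all_field.
From mathcomp Require Import mpoly.
From mathcomp Require Import ring zify.
Set Implicit Arguments.
Unset Strict Implicit.
Unset Printing Implicit Defensive.
Import GRing.Theory.
Local Open Scope ring_scope.

(* Expanding the (p-1)-th power shows that each ~c_i is a binomial coefficient
   times T_{M,g}(r), the coefficient of t^g in (1 + r t + t^2)^M, where p = 6n + 1
   and (M, g) = (2n, n), (4n, 2n), (4n, 5n) for ~c_1, ~c_2, ~c_3.  The coefficients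
   of T_{M,g} obey a two-term recursion, i.e. T_{M,g} solves the Gegenbauer-type
   equation (r^2 - 4) y'' + (1 - 2M) r y' + g (2M - g) y = 0, whose polynomial
   solutions of degree at most d form a line as long as the indicial factors
   (e - g)(e - 2M + g) do not vanish for e < d.  In characteristic 6n + 1 the
   polynomials (r^2 - 4)^n T_{2n,n} and (r^2 - 4)^n solve the equations of T_{4n,5n}
   and T_{4n,2n} respectively, so ~c_1 divides ~c_3 and ~c_2 is a nonzero multiple
   of (r^2 - 4)^n. *)

(* The coefficient of [r^e t^g] in [(1 + r t + t^2)^M]. *)
Definition trinom (M g e : nat) : nat :=
  if (e <= g)%N && ~~ odd (g - e) then ('C(M, e) * 'C(M - e, (g - e)./2))%N else 0%N.

Lemma trinom_eq0 M g e : [\/ (g < e)%N, (2 * M - g < e)%N | (M < e)%N] -> trinom M g e = 0%N.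
Proof.
rewrite /trinom; case: ifP => // /andP[le_eg even_ge] h.
have := odd_double_half (g - e); rewrite (negbTE even_ge) add0n => half_ge.
case: (ltnP M e) => [lt_Me|le_eM]; first by rewrite bin_small ?mul0n.
by rewrite (@bin_small (M - e)) ?muln0 //; case: h; lia.
Qed.

Lemma trinom_diag M g : trinom M g g = 'C(M, g).
Proof. by rewrite /trinom leqnn subnn /= bin0 muln1. Qed.

Lemma mul_bin_shift2 M e :
  (e.+2 * e.+1 * 'C(M, e.+2) = (M - e) * (M - e - 1) * 'C(M, e))%N.
Proof.
rewrite (mulnC e.+2) -mulnA mul_bin_left mulnCA mul_bin_left.
have -> : (M - e.+1 = M - e - 1)%N by lia.
ring.
Qed.

Lemma mul_bin_pred2 L j : (0 < j)%N ->
  (L * (L - 1) * 'C(L - 2, j - 1) = j * (L - j) * 'C(L, j))%N.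
Proof.
move=> j_gt0.
have -> : (L - 2 = (L - 1).-1)%N by lia.
rewrite -mulnA mul_bin_down mulnCA.
have -> : (L - 1 - (j - 1) = L - j)%N by lia.
have -> : (L - 1 = L.-1)%N by lia.
rewrite mul_bin_diag; have -> : (j - 1).+1 = j by lia.
ring.
Qed.

(* Passing from [e] to [e + 2] trades one factor [t^2] for two factors [r t]. *)
Lemma trinom_rec M g e :
  (4 * (e.+2 * e.+1) * trinom M g e.+2 = (g - e) * (2 * M - g - e) * trinom M g e)%N.
Proof.
rewrite /trinom; case: (leqP e.+2 g) => [le_e2g|lt_ge2]; last first.
  rewrite muln0; case: (ltnP g e) => [/= _|le_eg]; first by rewrite muln0.
  have [->|->] : e = g \/ g = e.+1 by lia.
    by rewrite subnn !mul0n.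
  by rewrite subSn // subnn /= muln0.
have -> : odd (g - e.+2) = odd (g - e).
  have -> : (g - e = (g - e.+2).+2)%N by lia.
  by rewrite /= negbK.
rewrite (ltnW (ltnW le_e2g)) /=.
case: (boolP (odd (g - e))) => [_|even_ge] /=; first by rewrite !muln0.
set j := ((g - e)./2)%N.
have ge_j : (g - e = 2 * j)%N.
  by have := odd_double_half (g - e); rewrite (negbTE even_ge) add0n -/j; lia.
have -> : ((g - e.+2)./2 = j - 1)%N.
  have -> : (g - e.+2 = (j - 1).*2)%N by rewrite doubleB; lia.
  by rewrite doubleK.
have -> : (M - e.+2 = M - e - 2)%N by lia.
have -> : (2 * M - g - e = 2 * (M - e - j))%N by lia.
rewrite ge_j mulnA -(mulnA 4) mul_bin_shift2.
have -> : (4 * ((M - e) * (M - e - 1) * 'C(M, e)) * 'C(M - e - 2, j - 1)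
  = 4 * 'C(M, e) * ((M - e) * (M - e - 1) * 'C(M - e - 2, j - 1)))%N by ring.
rewrite mul_bin_pred2; last by lia.
ring.
Qed.

Lemma sum_ord_eqn n j0 (G : 'I_n -> nat) (lt_j0n : (j0 < n)%N) :
  (\sum_(j < n) (j == j0 :> nat) * G j)%N = G (Ordinal lt_j0n).
Proof.
rewrite (bigD1 (Ordinal lt_j0n)) //= eqxx mul1n big1 ?addn0 // => j.
by rewrite -val_eqE => /negbTE ->.
Qed.

Lemma sum_bin_parity m e g :
  (\sum_(j < m.+1) (e + 2 * j == g) * 'C(m, j) =
   if (e <= g) && ~~ odd (g - e) then 'C(m, (g - e)./2) else 0)%N.
Proof.
have eq_cond (j : nat) :
    ((e + 2 * j == g) = ((e <= g) && ~~ odd (g - e)) && (j == (g - e)./2))%N.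
  have := odd_double_half (g - e).
  by case: (odd _) => /=; case: (leqP e g) => /=; case: eqP => //=; lia.
under eq_bigr => j _ do rewrite eq_cond.
case: ifP => _ /=; last by rewrite big1.
case: (ltnP (g - e)./2 m.+1) => [lt_m|le_m]; first by rewrite (sum_ord_eqn _ lt_m).
rewrite bin_small // big1 // => j _.
by rewrite (_ : (j == _ :> nat) = false) //; apply/eqP => E; have := ltn_ord j; lia.
Qed.

Section QuarticPower.
Variable p : nat.
Local Notation R := {poly 'F_p}.
Local Notation MP := {mpoly R[3]}.

Let mx3z : 'X_{1..3} := (U_(0%R : 'I_3) *+ 3 + U_(2%R : 'I_3))%MM.
Let my4 : 'X_{1..3} := (U_(1%R : 'I_3) *+ 4)%MM.
Let my2z2 : 'X_{1..3} := (U_(1%R : 'I_3) *+ 2 + U_(2%R : 'I_3) *+ 2)%MM.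
Let mz4 : 'X_{1..3} := (U_(2%R : 'I_3) *+ 4)%MM.

Lemma quarticE : quarticF p = 'X_[mx3z] + ('X_[my4] + 'X_[mz4] + ('X : R) *: 'X_[my2z2]).
Proof.
rewrite /quarticF !mpolyXn -!mpolyXD.
by rewrite -!addrA (addrC ('X *: _)).
Qed.

Definition quartic_mon N i k j :=
  (mx3z *+ (N - i) + my2z2 *+ k + my4 *+ (i - k - j) + mz4 *+ j)%MM.

Lemma mpolyX_prodE (a b c d : 'X_{1..3}) (r : R) u v w x :
  'X_[a] ^+ u * ('X_[b] ^+ v * 'X_[d] ^+ w * (r *: 'X_[c]) ^+ x) =
  r ^+ x *: ('X_[a *+ u + c *+ x + b *+ v + d *+ w] : MP).
Proof.
rewrite exprZn -scalerAr -scalerAr !mpolyXn !mpolyXD; congr (_ *: _).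
by rewrite mulrCA mulrC !mulrA.
Qed.

Lemma quarticXE N : quarticF p ^+ N =
  \sum_(i < N.+1) \sum_(k < i.+1) \sum_(j < (i - k).+1)
    ((('X : R) ^+ k *+ ('C(N, i) * 'C(i, k) * 'C(i - k, j))) *: 'X_[quartic_mon N i k j]).
Proof.
rewrite quarticE exprDn; apply: eq_bigr => i _.
rewrite exprDn mulr_sumr -sumrMnl; apply: eq_bigr => k _.
rewrite exprDn mulr_suml -sumrMnl mulr_sumr -sumrMnl; apply: eq_bigr => j _.
rewrite mulrnAl -mulrnA mulrnAr -mulrnA mpolyX_prodE scalerMnl.
by congr (_ *+ _ *: _); ring.
Qed.

Lemma coef_mcoeff_quarticX N (m : 'X_{1..3}) e :
  ((quarticF p ^+ N) @_ m)`_e =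
  (\sum_(i < N.+1) \sum_(k < i.+1) \sum_(j < (i - k).+1)
     (((k == e :> nat) && (quartic_mon N i k j == m)) * ('C(N, i) * 'C(i, k) * 'C(i - k, j))))%:R.
Proof.
have mcoeff_sum := big_morph _ (@mcoeffD 3 R m) (@mcoeff0 3 R m).
rewrite quarticXE mcoeff_sum coef_sum natr_sum; apply: eq_bigr => i _.
rewrite mcoeff_sum coef_sum natr_sum; apply: eq_bigr => k _.
rewrite mcoeff_sum coef_sum natr_sum; apply: eq_bigr => j _.
rewrite mcoeffZ mcoeffX mulr_natr !coefMn coefXn.
by rewrite eq_sym; case: (k == e :> nat); case: (_ == m); rewrite ?mul1n ?mul0n ?mulr1n ?mulr0n ?mul0rn.
Qed.

Lemma quartic_mon_eqE N i k j a b c :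
  (quartic_mon N i k j == [multinom [tuple a; b; c]]) =
  [&& 3 * (N - i) == a, 2 * k + 4 * (i - k - j) == b & (N - i) + 2 * k + 4 * j == c]%N.
Proof.
have monE (t : 'I_3) : quartic_mon N i k j t =
    [tuple 3 * (N - i); 2 * k + 4 * (i - k - j); (N - i) + 2 * k + 4 * j]%N`_t.
  rewrite /quartic_mon /mx3z /my4 /my2z2 /mz4 !(mnmDE, mulmnE, mnm1E).
  by case: t => -[|[|[|//]]] ? /=; lia.
apply/eqP/and3P => [/mnmP E|[/eqP <- /eqP <- /eqP <-]].
  have := E 0; have := E 1; have := E 2.
  by rewrite !monE !mnm_tnth !(tnth_nth 0%N) /= => -> -> ->; rewrite !eqxx.
by apply/mnmP => t; rewrite monE mnm_tnth (tnth_nth 0%N).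
Qed.

Lemma quartic_mon_target N M g i k j :
  (M <= N)%N -> (g <= 2 * M)%N -> (i <= N)%N -> (k <= i)%N -> (j <= i - k)%N ->
  (quartic_mon N i k j == [multinom [tuple 3 * (N - M); 2 * (2 * M - g); N - M + 2 * g]]%N)
  = (i == M) && (k + 2 * j == g)%N.
Proof.
move=> le_MN le_g2M le_iN le_ki le_jik; rewrite quartic_mon_eqE.
by apply/and3P/andP => [[/eqP ? /eqP ? /eqP ?]|[/eqP ? /eqP ?]]; split; apply/eqP; lia.
Qed.

Lemma coef_mcoeff_quarticX_trinom N M g e : (M <= N)%N -> (g <= 2 * M)%N ->
  ((quarticF p ^+ N) @_ [multinom [tuple 3 * (N - M); 2 * (2 * M - g); N - M + 2 * g]]%N)`_e
  = ('C(N, M) * trinom M g e)%:R.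
Proof.
move=> le_MN le_g2M; rewrite coef_mcoeff_quarticX; congr (_%:R).
transitivity (\sum_(i < N.+1) (i == M :> nat) * \sum_(k < i.+1) (k == e :> nat) *
    \sum_(j < (i - k).+1) (e + 2 * j == g) * ('C(N, i) * 'C(i, k) * 'C(i - k, j)))%N.
  apply: eq_bigr => i _; rewrite big_distrr; apply: eq_bigr => k _ /=.
  rewrite !big_distrr; apply: eq_bigr => j _ /=.
  have := ltn_ord i; have := ltn_ord k; have := ltn_ord j; rewrite !ltnS => ? ? ?.
  rewrite quartic_mon_target //.
  by case: (val k =P e) => [<-|_]; case: (i == M :> nat); rewrite ?mul0n ?mul1n ?andbF.
rewrite (sum_ord_eqn _ (le_MN : (M < N.+1)%N)) /=.
case: (leqP e M) => [le_eM|lt_Me].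
  rewrite (sum_ord_eqn _ (le_eM : (e < M.+1)%N)) /=.
  under eq_bigr => j _ do rewrite mulnCA.
  by rewrite -big_distrr sum_bin_parity /trinom /=; case: ifP; rewrite ?mulnA ?muln0.
rewrite trinom_eq0 ?muln0; last by apply/or3P; rewrite lt_Me !orbT.
by rewrite big1 // => k _; rewrite (_ : (k == e :> nat) = false) //; apply/eqP => E; have := ltn_ord k; lia.
Qed.

End QuarticPower.

Section Gegenbauer.
Variable F : fieldType.
Local Notation P := {poly F}.

(* The discriminant of [t^2 + r t + 1]. *)
Definition discr : P := 'X^2 - 4%:P.

(* Gegenbauer's operator after the substitution [x = -r/2]; [trinom_poly M g]
   below is the Gegenbauer polynomial [C_g^(-M)(-r/2)]. *)
Definition gegenbauer_op (a b : F) (y : P) : P :=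
  discr * y^`()^`() + a *: ('X * y^`()) + b *: y.

Definition indicial (a b : F) (e : nat) : F := e%:R * (e%:R - 1) + a * e%:R + b.

Lemma discr_monic : discr \is monic.
Proof. exact: monicXnsubC. Qed.

Lemma discr_neq0 : discr != 0.
Proof. exact: monic_neq0 discr_monic. Qed.

Lemma size_discrX n : size (discr ^+ n) = (2 * n).+1.
Proof.
have := size_exp discr n; rewrite size_XnsubC //=.
have : discr ^+ n != 0 by rewrite expf_neq0 ?discr_neq0.
by rewrite -size_poly_eq0; case: (size _) => // s _ /= ->.
Qed.

Lemma coef_discrX_top n : (discr ^+ n)`_(2 * n) = 1.
Proof.
by have /monicP := monic_exp n discr_monic; rewrite /lead_coef size_discrX.
Qed.

Lemma coef_gegenbauer_op a b y e :
  (gegenbauer_op a b y)`_e = indicial a b e * y`_e - 4 * (e.+2 * e.+1)%:R * y`_e.+2.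
Proof.
rewrite /gegenbauer_op /discr /indicial mulrBl !coefD !coefZ coefN coefXnM coefCM coefXM.
rewrite !coef_deriv; case: e => [|[|e]] /=; rewrite ?coef_deriv ?subSS ?subn0 ?natrM ?natrD; ring.
Qed.

Lemma gegenbauer_op_eq0 a b y : gegenbauer_op a b y = 0 <->
  forall e, indicial a b e * y`_e = 4 * (e.+2 * e.+1)%:R * y`_e.+2.
Proof.
split => [Ly e | rec_y].
  by apply/eqP; rewrite -subr_eq0 -coef_gegenbauer_op Ly coef0.
by apply/polyP => e; rewrite coef_gegenbauer_op rec_y subrr coef0.
Qed.

Lemma gegenbauer_opB a b c y z :
  gegenbauer_op a b (z - c *: y) = gegenbauer_op a b z - c *: gegenbauer_op a b y.
Proof.
rewrite /gegenbauer_op !derivB !derivZ -!mul_polyC; ring.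
Qed.

Lemma gegenbauer_op_sol_eq0 a b d w :
  gegenbauer_op a b w = 0 -> (forall e, (e < d)%N -> indicial a b e != 0) ->
  (size w <= d.+1)%N -> w`_d = 0 -> w = 0.
Proof.
move=> /gegenbauer_op_eq0 rec_w ind_neq0 size_w w_d.
suff w_eq0 t e : (d <= e + t)%N -> w`_e = 0.
  by apply/polyP => e; rewrite coef0 (w_eq0 d) // leq_addl.
elim: t e => [|t IHt] e.
  rewrite addn0 leq_eqVlt => /orP[/eqP <- //|lt_de].
  exact: nth_default (leq_trans size_w lt_de).
case: (leqP d (e + t)) => [le_d|lt_d] le_d1; first exact: IHt.
have /eqP := rec_w e; rewrite (IHt e.+2) ?mulr0; last by lia.
by rewrite mulf_eq0 (negbTE (ind_neq0 e _)) //=; [move/eqP | lia].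
Qed.

Lemma gegenbauer_op_uniq a b d (y z : P) :
  gegenbauer_op a b y = 0 -> gegenbauer_op a b z = 0 ->
  (forall e, (e < d)%N -> indicial a b e != 0) ->
  (size y <= d.+1)%N -> (size z <= d.+1)%N -> y`_d != 0 ->
  z = (z`_d / y`_d) *: y.
Proof.
move=> Ly Lz ind_neq0 size_y size_z y_d; apply/eqP; rewrite -subr_eq0; apply/eqP.
apply: (@gegenbauer_op_sol_eq0 a b d _ _ ind_neq0).
- by rewrite gegenbauer_opB Ly Lz scaler0 subr0.
- by rewrite (leq_trans (size_polyD _ _)) // size_polyN geq_max size_z (leq_trans (size_scale_leq _ _)).
- by rewrite coefB coefZ divfK ?subrr.
Qed.

Lemma deriv_discr : (discr : P)^`() = 'X *+ 2.
Proof. by rewrite /discr derivB derivC subr0 derivXn expr1. Qed.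

Lemma discr_derivX n :
  discr * (discr ^+ n)^`() = 'X * discr ^+ n * (2 * n)%:R :> P.
Proof.
rewrite deriv_exp deriv_discr; case: n => [|n] /=; first by rewrite mulr0n !mulr0.
by rewrite exprS natrM; ring.
Qed.

Lemma discr_derivX2 n :
  discr * (discr * (discr ^+ n)^`()^`()) =
  discr ^+ n * (discr * (2 * n)%:R + 'X ^+ 2 * (2 * n)%:R * ((2 * n)%:R - 2)) :> P.
Proof.
set Q := discr ^+ n.
have D := congr1 deriv (discr_derivX n).
rewrite -/Q !derivM deriv_discr derivX derivMn -polyC1 derivC mul0rn mulr0 addr0 in D.
have -> : discr * (discr * Q^`()^`()) =
    discr * ('X *+ 2 * Q^`() + discr * Q^`()^`()) - 'X *+ 2 * (discr * Q^`()) by ring.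
rewrite D discr_derivX -/Q polyC1.
have -> : discr * ((1 * Q + 'X * Q^`()) * (2 * n)%:R) =
  discr * Q * (2 * n)%:R + 'X * (2 * n)%:R * (discr * Q^`()) by ring.
rewrite discr_derivX -/Q.
ring.
Qed.

Lemma gegenbauer_op_discrXM n a b u :
  (2 * n)%:R * ((2 * n)%:R - 2 + a) = 0 ->
  gegenbauer_op a b (discr ^+ n * u) =
  discr ^+ n * gegenbauer_op (a + (4 * n)%:R) (b + (2 * n)%:R) u :> P.
Proof.
move=> hn; apply: (mulfI discr_neq0).
have hnP : (2 * n)%:R * ((2 * n)%:R - 2 + a%:P) = 0 :> P.
  by rewrite -!polyC_natr -polyCB -polyCD -polyCM hn.
have := discr_derivX n; have := discr_derivX2 n.
rewrite /gegenbauer_op !derivM !derivD !derivM -!mul_polyC !polyCD !polyC_natr.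
set Q := discr ^+ n; set d := discr; clearbody Q d => d2Q dQ.
apply/eqP; rewrite -subr_eq0; apply/eqP.
transitivity ((d * Q^`() - 'X * Q * (2 * n)%:R) * (d *+ 2 * u^`() + a%:P * 'X * u)
  + (d * (d * Q^`()^`()) - Q * (d * (2 * n)%:R + 'X^2 * (2 * n)%:R * ((2 * n)%:R - 2))) * u
  + (2 * n)%:R * ((2 * n)%:R - 2 + a%:P) * ('X^2 * Q * u)).
  ring.
by rewrite dQ d2Q hnP !subrr !mul0r !add0r.
Qed.

Definition trinom_poly M g : P := \poly_(e < M.+1) (trinom M g e)%:R.

Lemma coef_trinom_poly M g e : (trinom_poly M g)`_e = (trinom M g e)%:R.
Proof.
rewrite coef_poly; case: ltnP => // lt_Me.
by rewrite trinom_eq0 //; apply/or3P; rewrite lt_Me !orbT.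
Qed.

Lemma size_trinom_poly M g d :
  (g <= d)%N \/ (2 * M - g <= d)%N -> (size (trinom_poly M g) <= d.+1)%N.
Proof.
move=> le_d; apply/leq_sizeP => e lt_de; rewrite coef_trinom_poly trinom_eq0 //.
by case: le_d => ?; [apply: Or31 | apply: Or32]; lia.
Qed.

Lemma indicial_gegenbauer M g e : (g <= 2 * M)%N ->
  indicial (1 - (2 * M)%:R) (g * (2 * M - g))%:R e = (e%:R - g%:R) * (e%:R - (2 * M - g)%:R).
Proof. by move=> le_g2M; rewrite /indicial !natrM !natrB // !natrM; ring. Qed.

Lemma gegenbauer_op_trinom_poly M g : (g <= 2 * M)%N ->
  gegenbauer_op (1 - (2 * M)%:R) (g * (2 * M - g))%:R (trinom_poly M g) = 0.
Proof.
move=> le_g2M; apply/gegenbauer_op_eq0 => e.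
rewrite !coef_trinom_poly indicial_gegenbauer // !natrM.
have := congr1 (fun k => k%:R : F) (trinom_rec M g e); rewrite /= !natrM => rec.
have [T0|T_neq0] := eqVneq (trinom M g e) 0%N.
  by rewrite T0 in rec *; rewrite rec; ring.
have le_eg : (e <= g)%N.
  by apply: contraNT T_neq0; rewrite -ltnNge => ?; apply/eqP/trinom_eq0; apply: Or31.
have le_eg' : (e <= 2 * M - g)%N.
  by apply: contraNT T_neq0; rewrite -ltnNge => ?; apply/eqP/trinom_eq0; apply: Or32.
by rewrite rec (natrB _ le_eg) (natrB _ le_eg'); ring.
Qed.

Lemma size_trinom_poly_eq M g : ('C(M, g)%:R : F) != 0 -> size (trinom_poly M g) = g.+1.
Proof.
move=> bin_neq0; apply/eqP; rewrite eqn_leq size_trinom_poly; last by left.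
rewrite ltnNge; apply: contra bin_neq0 => /(nth_default 0).
by rewrite coef_trinom_poly trinom_diag => ->.
Qed.

Lemma gegenbauer_op_discrX_trinom n : (6 * n + 1)%:R = 0 :> F ->
  gegenbauer_op (1 - (2 * (4 * n))%:R) (5 * n * (2 * (4 * n) - 5 * n))%:R
    (discr ^+ n * trinom_poly (2 * n) n) = 0.
Proof.
move=> char6n; rewrite gegenbauer_op_discrXM; last first.
  by rewrite -[RHS](mulr0 (- (2 * n)%:R)) -char6n; ring.
rewrite (_ : 1 - (2 * (4 * n))%:R + (4 * n)%:R = 1 - (2 * (2 * n))%:R); last by ring.
rewrite (_ : (2 * (4 * n) - 5 * n = 3 * n)%N); last by lia.
rewrite (_ : _ + (2 * n)%:R = (n * (2 * (2 * n) - n))%:R).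
  by rewrite gegenbauer_op_trinom_poly ?mulr0 //; lia.
rewrite (_ : (2 * (2 * n) - n = 3 * n)%N); last by lia.
by rewrite -[RHS]addr0 -[in RHS](mulr0 (2 * n)%:R) -char6n; ring.
Qed.

Lemma gegenbauer_op_discrX n : (6 * n + 1)%:R = 0 :> F ->
  gegenbauer_op (1 - (2 * (4 * n))%:R) (2 * n * (2 * (4 * n) - 2 * n))%:R (discr ^+ n) = 0.
Proof.
move=> char6n; rewrite -[discr ^+ n]mulr1 gegenbauer_op_discrXM; last first.
  by rewrite -[RHS](mulr0 (- (2 * n)%:R)) -char6n; ring.
rewrite /gegenbauer_op -polyC1 derivC !linear0 !mulr0 scaler0 !add0r.
rewrite (_ : 2 * (4 * n) - 2 * n = 6 * n)%N; last by lia.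
rewrite (_ : (2 * n * (6 * n))%:R + (2 * n)%:R = 0) ?scale0r ?mulr0 //.
by rewrite -(mulr0 (2 * n)%:R) -char6n; ring.
Qed.

End Gegenbauer.

Arguments discr {F}.
Arguments gegenbauer_op {F}.
Arguments indicial {F}.
Arguments trinom_poly {F}.

Lemma ctildeE p M g a b c : (M <= p - 1)%N -> (g <= 2 * M)%N ->
  a = (3 * (p - 1 - M))%N -> b = (2 * (2 * M - g))%N -> c = (p - 1 - M + 2 * g)%N ->
  ctilde p a b c = 'C(p - 1, M)%:R *: trinom_poly M g.
Proof.
move=> le_Mp le_g2M -> -> ->; apply/polyP => e.
by rewrite coefZ coef_trinom_poly /ctilde coef_mcoeff_quarticX_trinom // natrM.
Qed.

Lemma prime_ndvd_fact p a : prime p -> (a < p)%N -> ~~ (p %| a`!)%N.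
Proof.
move=> p_prime; elim: a => [|a IHa] lt_ap; first by rewrite fact0 dvdn1 neq_ltn prime_gt1 ?orbT.
by rewrite factS Euclid_dvdM // negb_or IHa ?(ltnW lt_ap) // gtnNdvd.
Qed.

Lemma Fp_bin_neq0 p a b : prime p -> (a < p)%N -> (b <= a)%N -> ('C(a, b)%:R : 'F_p) != 0.
Proof.
move=> p_prime lt_ap le_ba; rewrite -(dvdn_pcharf (pchar_Fp p_prime)).
apply: contraNN (prime_ndvd_fact p_prime lt_ap).
by rewrite -(bin_fact le_ba); apply: dvdn_mulr.
Qed.

Lemma Fp_natr_eq p x y : prime p -> (x < p)%N -> (y < p)%N -> ((x%:R : 'F_p) == y%:R) = (x == y).
Proof.
move=> p_prime lt_xp lt_yp; apply/eqP/eqP => [/(congr1 val)|-> //].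
by rewrite /= !val_Fp_nat // !modn_small.
Qed.

Section CharSixNPlusOne.
Variables p n : nat.
Hypothesis p_prime : prime p.
Hypothesis p_eq : p = (6 * n + 1)%N.
Local Notation P := {poly 'F_p}.

Let char6n : (6 * n + 1)%:R = 0 :> 'F_p.
Proof. by rewrite -p_eq pchar_Fp_0. Qed.

Lemma indicial_gegenbauer_neq0 M g e : (g <= 2 * M)%N -> (g < p)%N -> (2 * M - g < p)%N ->
  (e < g)%N -> (e < 2 * M - g)%N -> indicial (1 - (2 * M)%:R) (g * (2 * M - g))%:R e != 0 :> 'F_p.
Proof.
move=> le_g2M lt_gp lt_g'p lt_eg lt_eg'.
rewrite indicial_gegenbauer // mulf_neq0 // subr_eq0 Fp_natr_eq //; try lia.
Qed.

Lemma trinom_poly_dvd : (trinom_poly (2 * n) n : P) %| trinom_poly (4 * n) (5 * n).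
Proof.
set y : P := discr ^+ n * trinom_poly (2 * n) n.
have bin_neq0 : ('C(2 * n, n)%:R : 'F_p) != 0 by rewrite Fp_bin_neq0 //; lia.
have size_y : size y = (3 * n).+1.
  rewrite /y size_monicM ?monic_exp ?discr_monic // ?size_discrX ?size_trinom_poly_eq //; first lia.
  by rewrite -size_poly_eq0 size_trinom_poly_eq.
have y_top : y`_(3 * n) != 0.
  have -> : (3 * n = (size y).-1)%N by rewrite size_y.
  rewrite -/(lead_coef y) lead_coef_monicM ?monic_exp ?discr_monic //.
  by rewrite lead_coefE size_trinom_poly_eq // coef_trinom_poly trinom_diag.
have T3_sol : gegenbauer_op (1 - (2 * (4 * n))%:R) (5 * n * (2 * (4 * n) - 5 * n))%:R
    (trinom_poly (4 * n) (5 * n) : P) = 0 by apply: gegenbauer_op_trinom_poly; lia.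
rewrite (gegenbauer_op_uniq (gegenbauer_op_discrX_trinom char6n) T3_sol (d := 3 * n)).
- by rewrite scalerAl dvdp_mull.
- by move=> e lt_e; apply: indicial_gegenbauer_neq0; lia.
- by rewrite -/y size_y.
- by apply: size_trinom_poly; right; lia.
- exact: y_top.
Qed.

Lemma trinom_poly_discrX :
  (trinom_poly (4 * n) (2 * n) : P) = 'C(4 * n, 2 * n)%:R *: discr ^+ n.
Proof.
have T2_sol : gegenbauer_op (1 - (2 * (4 * n))%:R) (2 * n * (2 * (4 * n) - 2 * n))%:R
    (trinom_poly (4 * n) (2 * n) : P) = 0 by apply: gegenbauer_op_trinom_poly; lia.
rewrite (gegenbauer_op_uniq (gegenbauer_op_discrX char6n) T2_sol (d := 2 * n)).
- by rewrite coef_discrX_top divr1 coef_trinom_poly trinom_diag.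
- by move=> e lt_e; apply: indicial_gegenbauer_neq0; lia.
- by rewrite size_discrX.
- by apply: size_trinom_poly; left.
- by rewrite coef_discrX_top oner_neq0.
Qed.

End CharSixNPlusOne.

Theorem proposition3p8 (p : nat) (hp : prime p) (hp5 : (5 <= p)%N)
    (hp6 : p = 1 %[mod 6]) :
  (ctilde1 p %| ctilde3 p)%R /\
  (forall (L : closedFieldType) (f : {rmorphism 'F_p -> L}) (x : L),
      root (map_poly f (ctilde2 p)) x = (x == 2) || (x == -2)).
Proof.
set n := (p %/ 6)%N.
have p_eq : p = (6 * n + 1)%N by rewrite {1}(divn_eq p 6) hp6 mulnC.
have ctilde1E : ctilde1 p = 'C(p - 1, 2 * n)%:R *: trinom_poly (2 * n) n.
  by apply: ctildeE; lia.
have ctilde2E : ctilde2 p = 'C(p - 1, 4 * n)%:R *: trinom_poly (4 * n) (2 * n).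
  by apply: ctildeE; lia.
have ctilde3E : ctilde3 p = 'C(p - 1, 4 * n)%:R *: trinom_poly (4 * n) (5 * n).
  by apply: ctildeE; lia.
split.
  rewrite ctilde1E ctilde3E dvdpZl ?Fp_bin_neq0 //; try lia.
  by rewrite dvdpZr ?Fp_bin_neq0 ?trinom_poly_dvd //; lia.
move=> L f x; rewrite ctilde2E trinom_poly_discrX // scalerA map_polyZ rootZ; last first.
  by rewrite fmorph_eq0 mulf_neq0 // Fp_bin_neq0 //; lia.
rewrite rmorphXn /discr rmorphB /= map_polyXn map_polyC /= rmorph_nat rootE horner_exp.
rewrite !hornerE expf_eq0 (_ : (0 < n)%N) /=; last by lia.
by rewrite (_ : x ^+ 2 - 4 = (x - 2) * (x + 2)) ?mulf_eq0 ?subr_eq0 ?addr_eq0 //; ring.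
Qed.
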